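(* Let $\Gamma_0$ and $\Sigma_0$ be finite normal circulants and let $n_1,\dots,n_r,m_1,\dots,m_s$ be integers greater than $3$ such that $|V(\Gamma_0)|,n_1,\dots,n_r$ are pairwise coprime, $|V(\Sigma_0)|,m_1,\dots,m_s$ are pairwise coprime, and $\mathrm{Aut}(\Gamma_0)\times\mathrm{S}_{n_1}\times\dots\times\mathrm{S}_{n_r}\cong\mathrm{Aut}(\Sigma_0)\times\mathrm{S}_{m_1}\times\dots\times\mathrm{S}_{m_s}$ as abstract groups. Then $r=s$ and $\{n_1,\dots,n_r\}=\{m_1,\dots,m_s\}$.
   Context: A digraph is a pair $(V,A)$ with $A\subseteq V\times V$, with vertex set $V(\Gamma)=V$. It is a normal circulant if $\mathrm{Aut}(\Gamma)$ has a finite cyclic subgroup that is regular on $V$ and normal in $\mathrm{Aut}(\Gamma)$. $\mathrm{S}_n$ is the symmetric group of degree $n$. *)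

From HB Require Import structures.
From mathcomp Require Import all_boot all_fingroup all_solvable.
Set Implicit Arguments. Unset Strict Implicit. Unset Printing Implicit Defensive.
Local Open Scope group_scope.

(* A (finite) digraph on the vertex set V is an arc relation A : rel V,
   i.e. A x y <-> (x,y) is an arc. *)

Definition Aut (V : finType) (A : rel V) : {set {perm V}} :=
  [set g : {perm V} | [forall x, forall y, A (g x) (g y) == A x y]].

Lemma Aut_group_set (V : finType) (A : rel V) : group_set (Aut A).
Proof.
apply/group_setP; split.
  by rewrite inE; apply/forallP=> x; apply/forallP=> y; rewrite !perm1.
move=> g h; rewrite !inE => /forallP Hg /forallP Hh.
apply/forallP=> x; apply/forallP=> y; rewrite !permM.
by rewrite (eqP (forallP (Hh (g x)) (g y))) (eqP (forallP (Hg x) y)).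
Qed.
Canonical Aut_group (V : finType) (A : rel V) := Group (Aut_group_set A).

Definition regular (V : finType) (C : {set {perm V}}) : Prop :=
  [transitive C, on [set: V] | 'P] /\ forall x : V, 'C_C[x | 'P] = 1.

Definition normal_circulant (V : finType) (A : rel V) : Prop :=
  exists C : {group {perm V}},
    [/\ C \subset Aut A, cyclic C, regular C & C <| Aut A].

Definition Sym_family (ns : seq nat) (i : 'I_(size ns)) : finGroupType :=
  {perm 'I_(nth 0 ns i)}.

Definition AutxSyms (V : finType) (A : rel V) (ns : seq nat)
  : {set ({perm V} * {dffun forall i : 'I_(size ns), @Sym_family ns i})%type} :=
  setX (Aut A) [set: {dffun forall i : 'I_(size ns), @Sym_family ns i}].

From Pilot Require Import Defs.
From mathcomp Require Import all_boot all_fingroup all_solvable.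
Set Implicit Arguments. Unset Strict Implicit. Unset Printing Implicit Defensive.

(* If C is a cyclic regular normal subgroup of G = Aut(Gamma), then G/C_G(C)
   embeds in the abelian group Aut(C), so G' <= C_G(C) = C (a transitive
   abelian group is self-centralising) and G'' = 1.  Hence in
   G x S_{n_1} x ... x S_{n_r} the nonabelian simple normal subgroups are
   exactly the A_{n_i} with n_i >= 5, and their orders n_i!/2 recover these
   n_i from the isomorphism type.  The n_i are distinct, being coprime and
   > 1, and the only remaining value, 4, is detected by the order of the
   second derived subgroup, the product of the |S_{n_i}''|, to which S_4
   contributes the factor |V_4| = 4 and G nothing. *)

Local Open Scope group_scope.

Lemma abelian_transitive_cent_sub (V : finType) (C : {group {perm V}}) :
  abelian C -> [transitive C, on [set: V] | 'P] -> 'C(C) \subset C.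
Proof.
move=> cCC trC; apply/subsetP=> k cCk.
have [x _ | V0] := pickP (@predT V); last first.
  suff ->: k = 1 by rewrite group1.
  by apply/permP=> y; have := V0 y.
have orbitT y : y \in orbit 'P C x by rewrite (atransP trC) ?inE.
have /orbitP[c Cc /= ckx] := orbitT (k x).
suff ->: k = c by [].
apply/permP=> y; have /orbitP[d Cd <-] := orbitT y; rewrite /= -!permM.
have cdk : commute d k by apply/esym/(centP cCk).
have cdc : commute d c by apply: (centsP cCC).
by rewrite cdk cdc !permM -ckx.
Qed.

Lemma normal_circulant_Aut_der2 (V : finType) (A : rel V) :
  normal_circulant A -> (Defs.Aut A)^`(2) = 1.
Proof.
case=> C [_ cycC [trC _] /normal_norm nCG].
have cCC := cyclic_abelian cycC.
have nCG' : (Defs.Aut A)^`(1) \subset 'N(C) := subset_trans (der_sub 1 _) nCG.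
have sG'C : (Defs.Aut A)^`(1) \subset C.
  apply: subset_trans (abelian_transitive_cent_sub cCC trC).
  rewrite -ker_conj_aut ker_trivg_morphim nCG' morphim_der //=.
  have cAut : abelian (conj_aut C @* Defs.Aut A).
    exact: abelianS (Aut_conj_aut _ _) (Aut_cyclic_abelian cycC).
  by rewrite (derG1P cAut).
apply/trivgP; apply: subset_trans (commgSS sG'C sG'C) _.
by rewrite -derg1 (derG1P cCC).
Qed.

Lemma simple_nonabelian_perfect (gT : finGroupType) (G : {group gT}) :
  simple G -> ~~ abelian G -> G^`(1) = G.
Proof.
move=> /simpleP[_ simG] nabG; case: (simG _ (der_normal 1 G)) => // G'1.
by case/derG1P: nabG.
Qed.

Lemma normal_dprodl (gT : finGroupType) (A B : {set gT}) (G N : {group gT}) :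
  A \x B = G -> N <| A -> N <| G.
Proof.
move=> /dprodP[[K H -> ->] defG cKH _] /andP[sNK nNK].
rewrite /normal -defG (subset_trans sNK (mulG_subl _ _)) mulG_subG nNK.
exact: cents_norm (subset_trans cKH (centS sNK)).
Qed.

Lemma setXn_setT (I : finType) (T_ : I -> finGroupType) :
  [set: {dffun forall i, T_ i}] = setXn (fun i => [set: T_ i]).
Proof.
by apply/setP=> x; rewrite !inE; apply/esym/forallP=> i; rewrite inE.
Qed.

Definition has_nonabelian_simple_normal (gT : finGroupType) (G : {set gT})
    (k : nat) : Prop :=
  exists N : {group gT}, [/\ N <| G, simple N, ~~ abelian N & #|N| = k].

Section NonabelianSimpleNormal.

Variables (gT rT : finGroupType) (k : nat).

Lemma nonabelian_simple_normal_witness (N : {group gT}) (L G : {group rT}) :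
  N \isog L -> L <| G -> simple N -> ~~ abelian N ->
  has_nonabelian_simple_normal G #|N|.
Proof.
move=> isoN nLG simN nabN; exists L; split=> //.
- by rewrite -(isog_simple isoN).
- by rewrite -(isog_abelian isoN).
- by rewrite -(card_isog isoN).
Qed.

Lemma nonabelian_simple_normal_isog (G : {group gT}) (H : {group rT}) :
  G \isog H -> has_nonabelian_simple_normal G k ->
  has_nonabelian_simple_normal H k.
Proof.
case/isogP=> f injf <- [N [nNG simN nabN <-]].
have isoN := sub_isog (normal_sub nNG) injf.
exact: nonabelian_simple_normal_witness isoN (morphim_normal f nNG) simN nabN.
Qed.

Lemma nonabelian_simple_normal_dprodl (A B : {set gT}) (G : {group gT}) :
  A \x B = G -> has_nonabelian_simple_normal A k ->
  has_nonabelian_simple_normal G k.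
Proof.
move=> defG [N [nNK ? ? ?]]; exists N; split=> //.
exact: normal_dprodl defG nNK.
Qed.

Lemma nonabelian_simple_normal_morphim (D G N : {group gT})
    (f : {morphism D >-> rT}) :
  G \subset D -> N <| G -> simple N -> ~~ abelian N -> f @* N != 1 ->
  has_nonabelian_simple_normal (f @* G) #|N|.
Proof.
move=> sGD nNG simN nabN ntfN.
have sND := subset_trans (normal_sub nNG) sGD.
have kerN1 : 'ker_N f = 1.
  have /simpleP[_ simN'] := simN.
  case: (simN' _ (normalGI sND (ker_normal f))) => // kerN.
  case/negP: ntfN; rewrite -subG1.
  by have := subsetIr N ('ker f); rewrite kerN ker_trivg_morphim => /andP[].
have isoN : N \isog f @* N.
  have := first_isog_loc f sND; rewrite kerN1.
  exact: isog_trans (quotient1_isog N).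
exact: nonabelian_simple_normal_witness isoN (morphim_normal f nNG) simN nabN.
Qed.

End NonabelianSimpleNormal.

Lemma nonabelian_simple_normal_setX (aT bT : finGroupType) (M : {group aT})
    (H : {group bT}) k :
  solvable M ->
  has_nonabelian_simple_normal (setX M H) k <->
  has_nonabelian_simple_normal H k.
Proof.
move=> solM; split=> [[N [nNG simN nabN <-]] | nsnH]; last first.
  have nsn1H := nonabelian_simple_normal_isog (@isog_set1X aT bT H) nsnH.
  have defG : setX 1 H \x setX M 1 = setX M H by rewrite dprodC setX_dprod.
  exact: nonabelian_simple_normal_dprodl defG nsn1H.
have /simpleP[ntN _] := simN.
have fstN1 : [morphism of @fst aT bT] @* N = 1.
  apply/eqP; apply: contraT => ntfN.
  have sfNM : [morphism of @fst aT bT] @* N \subset M.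
    by rewrite -(morphim_fstX M H) morphimS ?normal_sub.
  have := sol_der1_proper solM sfNM ntfN.
  by rewrite -morphim_der ?subsetT // simple_nonabelian_perfect // properxx.
rewrite -(morphim_sndX M H).
apply: nonabelian_simple_normal_morphim => //; first exact: subsetT.
apply: contra ntN => /eqP sndN1; apply/eqP/trivgP/subsetP=> -[x1 x2] Nx.
have /set1P-> : x1 \in [1 aT] by rewrite -fstN1; exact: mem_morphim Nx.
have /set1P-> : x2 \in [1 bT] by rewrite -sndN1; exact: mem_morphim Nx.
exact: set11.
Qed.

Lemma nonabelian_simple_normal_setXn (I : finType) (T_ : I -> finGroupType) k :
  has_nonabelian_simple_normal [set: {dffun forall i, T_ i}] k <->
  exists i, has_nonabelian_simple_normal [set: T_ i] k.
Proof.
split=> [[N [nNG simN nabN <-]] | [i nsnTi]]; last first.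
  have nsn1Ti := nonabelian_simple_normal_isog (isog_setXn [set: T_ i]%G) nsnTi.
  have := setXn_dprod (fun i => [set: T_ i]%G).
  rewrite (bigD1 i) //= -setXn_setT => defP.
  exact: nonabelian_simple_normal_dprodl defP nsn1Ti.
have /simpleP[ntN _] := simN.
have [i ntiN | triv] := pickP (fun i : I => dffun_morphism T_ i @* N != 1).
  exists i; rewrite -(morphim_dffunXn i (fun i => [set: T_ i]%G)) -setXn_setT.
  exact: nonabelian_simple_normal_morphim (subsetT _) nNG simN nabN ntiN.
case/negP: ntN; apply/eqP/trivgP/subsetP=> x Nx; apply/set1gP/ffunP=> i.
have /negbFE/eqP triv_i := triv i.
by rewrite oneg_ffun; apply/set1gP; rewrite -triv_i; exact: mem_morphim Nx.
Qed.

Section SymmetricGroup.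

Variable T : finType.

Lemma Sym_der1_sub_Alt : [set: {perm T}]^`(1) \subset 'Alt_T.
Proof.
rewrite derg1 gen_subG; apply/subsetP=> _ /imset2P[s t _ _ ->].
rewrite Alt_even /commg /conjg !odd_permM !odd_permV.
by case: (odd_perm s); case: (odd_perm t).
Qed.

Lemma perfect_sub_Alt (N : {group {perm T}}) : N^`(1) = N -> N \subset 'Alt_T.
Proof.
by move=> <-; apply: subset_trans (dergS 1 (subsetT N)) Sym_der1_sub_Alt.
Qed.

Lemma card_Alt_half : 1 < #|T| -> #|'Alt_T| = #|T|`! %/ 2.
Proof. by move=> T1; rewrite -(card_Alt T1) mulKn. Qed.

(* The bound on k stands in for the solvability of S_n for n <= 4. *)
Lemma nonabelian_simple_normal_Sym k : 24 < k ->
  has_nonabelian_simple_normal [set: {perm T}] k <->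
  4 < #|T| /\ k = #|T|`! %/ 2.
Proof.
move=> k24; split=> [[N [nNS simN nabN cardN]] | [T4 ->]].
  rewrite -{}cardN in k24 *.
  have sNA := perfect_sub_Alt (simple_nonabelian_perfect simN nabN).
  have T4 : 4 < #|T|.
    rewrite ltnNge; apply: contraL k24 => T_le4; rewrite -leqNgt.
    apply: leq_trans (subset_leq_card (subsetT N)) _.
    by rewrite -[[set: _]]/('Sym_T) card_Sym (leq_fact T_le4).
  have /simpleP[ntN _] := simN; have /simpleP[_ simA] := simple_Alt5 T4.
  case: (simA _ (normalS sNA (subsetT _) nNS)) => [N1 | ->].
    by rewrite N1 eqxx in ntN.
  by rewrite card_Alt_half // (ltn_trans _ T4).
exists ('Alt_T)%G; split; first exact: Alt_normal.
- exact: simple_Alt5.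
- by apply/negP=> /abelian_sol; rewrite solvable_AltF.
- by rewrite card_Alt_half // (ltn_trans _ T4).
Qed.

End SymmetricGroup.

Lemma Sym4_der2_nontrivial : 1 < #|[set: {perm 'I_4}]^`(2)|.
Proof.
pose o0 := @Ordinal 4 0 isT; pose o1 := @Ordinal 4 1 isT.
pose o2 := @Ordinal 4 2 isT; pose o3 := @Ordinal 4 3 isT.
have der1_comm (s t : {perm 'I_4}) : [~ s, t] \in [set: {perm 'I_4}]^`(1).
  by apply: mem_commg; rewrite inE.
set z := [~ [~ tperm o0 o1, tperm o1 o2], [~ tperm o1 o2, tperm o2 o3]].
have z_der2 : z \in [set: {perm 'I_4}]^`(2) by apply: mem_commg.
rewrite (cardD1 1) group1 ltnS lt0n; apply/existsP; exists z.
rewrite z_der2 andbT; apply/eqP=> /eqP/commgP/permP/(_ o0).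
rewrite /commg /conjg !permM !tpermV !permE /=.
by move/(congr1 val).
Qed.

Lemma card_der_setXn (I : finType) (T_ : I -> finGroupType) n :
  #|[set: {dffun forall i, T_ i}]^`(n)| = (\prod_i #|[set: T_ i]^`(n)|)%N.
Proof.
have := setXn_dprod (fun i => [set: T_ i]%G).
rewrite -setXn_setT => /(der_bigdprod n)/bigdprod_card <-.
by apply: eq_bigr => i _; apply/esym/card_isog/isog_der/isog_setXn.
Qed.

Lemma card_der_setX (aT bT : finGroupType) (M : {group aT}) (H : {group bT}) n :
  M^`(n) = 1 -> #|(setX M H)^`(n)| = #|H^`(n)|.
Proof.
move=> Mn1; have /(der_dprod n)/dprod_card <- := setX_dprod M H.
rewrite -(card_isog (isog_der n (@isog_setX1 aT bT M))) /= Mn1 cards1 mul1n.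
by apply/esym/card_isog/isog_der; apply: isog_set1X.
Qed.

Lemma half_fact_inj m n : 1 < m -> 1 < n -> m`! %/ 2 = n`! %/ 2 -> m = n.
Proof.
move=> m_gt1 n_gt1 eq_half.
have eq_fact : m`! = n`!.
  rewrite -(divnK (@dvdn_fact 2 m m_gt1)) -(divnK (@dvdn_fact 2 n n_gt1)).
  by rewrite eq_half.
have [m_gt0 n_gt0] := (ltnW m_gt1, ltnW n_gt1).
apply/eqP; rewrite eqn_leq -(leq_pfact m_gt0 n_gt0) -(leq_pfact n_gt0 m_gt0).
by rewrite eq_fact leqnn.
Qed.

Lemma pairwise_coprime_uniq (s : seq nat) :
  all (fun n => 1 < n) s -> pairwise coprime s -> uniq s.
Proof.
elim: s => //= n s IHs /andP[n_gt1 s_gt1] /andP[cop_n cop_s].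
rewrite IHs // andbT; apply: contraL n_gt1 => n_s.
by have := allP cop_n n n_s; rewrite /coprime gcdnn => /eqP->.
Qed.

Lemma big_pred1_uniq_seq (R : Type) (idx : R) (op : Monoid.law idx)
    (T : eqType) (s : seq T) (x : T) (F : T -> R) :
  uniq s -> \big[op/idx]_(y <- s | y == x) F y = if x \in s then F x else idx.
Proof.
move=> us; case: ifP => xs.
  by rewrite -big_filter filter_pred1_uniq // big_seq1.
by rewrite big1_seq // => y /andP[/eqP-> ]; rewrite xs.
Qed.

Lemma eq_mem_prod_uniq (T : eqType) (s t : seq T) (x : T) (f : T -> nat) :
    uniq s -> uniq t -> (forall y, y != x -> (y \in s) = (y \in t)) ->
    (forall y, 0 < f y) -> 1 < f x ->
  (\prod_(y <- s) f y = \prod_(y <- t) f y)%N -> s =i t.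
Proof.
move=> us ut st f_gt0 fx_gt1.
rewrite (bigID (pred1 x)) [in RHS](bigID (pred1 x)) /= !big_pred1_uniq_seq //.
have -> : (\prod_(y <- s | y != x) f y = \prod_(y <- t | y != x) f y)%N.
  rewrite -big_filter -[RHS]big_filter; apply: perm_big.
  apply: uniq_perm; rewrite ?filter_uniq // => y; rewrite !mem_filter.
  by case: eqVneq => //= /st.
move/eqP; rewrite eqn_pmul2r ?prodn_gt0 // => /eqP x_st y.
have [-> | /st //] := eqVneq y x.
move: x_st fx_gt1.
by case: (x \in s); case: (x \in t) => // -> //; rewrite ltnn.
Qed.

Lemma mem_nonabelian_simple_normal_Syms (aT : finGroupType) (M : {group aT})
    (ns : seq nat) n :
  solvable M -> 4 < n ->
  n \in ns <->
  has_nonabelian_simple_normal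
    (setX M [set: {dffun forall i : 'I_(size ns), @Sym_family ns i}])
    (n`! %/ 2).
Proof.
move=> solM n_gt4.
have half_gt24 : 24 < n`! %/ 2.
  exact: leq_trans (leq_div2r 2 (leq_fact n_gt4)).
split=> [n_ns | /(nonabelian_simple_normal_setX _ _ solM)].
  apply/(nonabelian_simple_normal_setX _ _ solM)/nonabelian_simple_normal_setXn.
  have i_lt : index n ns < size ns by rewrite index_mem.
  exists (Ordinal i_lt); apply/nonabelian_simple_normal_Sym => //=.
  by rewrite card_ord nth_index.
case/nonabelian_simple_normal_setXn=> i.
move/(nonabelian_simple_normal_Sym _ half_gt24).
rewrite card_ord => -[ni_gt4 /half_fact_inj ->]; first exact: mem_nth.
- exact: ltn_trans n_gt4.
- exact: ltn_trans ni_gt4.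
Qed.

Lemma isog_setX_Syms_mem (aT bT : finGroupType) (M : {group aT})
    (L : {group bT}) (ns ms : seq nat) n :
  solvable M -> solvable L -> 4 < n ->
  setX M [set: {dffun forall i : 'I_(size ns), @Sym_family ns i}] \isog
  setX L [set: {dffun forall i : 'I_(size ms), @Sym_family ms i}] ->
  (n \in ns) = (n \in ms).
Proof.
move=> solM solL n_gt4 iso; apply/idP/idP.
  move/(mem_nonabelian_simple_normal_Syms _ solM n_gt4).
  move/(nonabelian_simple_normal_isog iso).
  by move/(mem_nonabelian_simple_normal_Syms _ solL n_gt4).
move/(mem_nonabelian_simple_normal_Syms _ solL n_gt4).
move/(nonabelian_simple_normal_isog (isog_symr iso)).
by move/(mem_nonabelian_simple_normal_Syms _ solM n_gt4).
Qed.

Lemma card_der2_setX_Syms (aT : finGroupType) (M : {group aT}) (ns : seq nat) :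
  M^`(2) = 1 ->
  #|(setX M [set: {dffun forall i : 'I_(size ns), @Sym_family ns i}])^`(2)| =
  (\prod_(n <- ns) #|[set: {perm 'I_n}]^`(2)|)%N.
Proof.
by move=> M2; rewrite card_der_setX // card_der_setXn (big_nth 0) big_mkord.
Qed.

Theorem lemma5p4 (V W : finType) (A : rel V) (B : rel W) (ns ms : seq nat) :
  normal_circulant A -> normal_circulant B ->
  all (fun n => 3 < n) ns -> all (fun m => 3 < m) ms ->
  pairwise coprime (#|V| :: ns) -> pairwise coprime (#|W| :: ms) ->
  AutxSyms A ns \isog AutxSyms B ms ->
  size ns = size ms /\ ns =i ms.
Proof.
move=> ncA ncB ns_gt3 ms_gt3 /andP[_ cop_ns] /andP[_ cop_ms] isoAB.
have gt1 := sub_all (fun n (n_gt3 : 3 < n) => ltnW (ltnW n_gt3)).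
have uns := pairwise_coprime_uniq (gt1 _ ns_gt3) cop_ns.
have ums := pairwise_coprime_uniq (gt1 _ ms_gt3) cop_ms.
have derA := normal_circulant_Aut_der2 ncA.
have derB := normal_circulant_Aut_der2 ncB.
have solA : solvable (Defs.Aut A) by apply/derivedP; exists 2.
have solB : solvable (Defs.Aut B) by apply/derivedP; exists 2.
pose der2_Sym n := #|[set: {perm 'I_n}]^`(2)|.
have eq_ns_ms : ns =i ms.
  apply: (eq_mem_prod_uniq (x := 4) (f := der2_Sym)) uns ums _ _ _ _.
  - move=> n; case: ltngtP => // [n_lt4 | n_gt4] _.
      apply/idP/idP=> [/(allP ns_gt3) | /(allP ms_gt3)];
      by rewrite ltnNge -ltnS n_lt4.
    exact: isog_setX_Syms_mem solA solB n_gt4 isoAB.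
  - by move=> n; apply: cardG_gt0.
  - exact: Sym4_der2_nontrivial.
  rewrite -(card_der2_setX_Syms ns derA) -(card_der2_setX_Syms ms derB).
  exact/card_isog/isog_der.
by split=> //; apply/perm_size/uniq_perm.
Qed.
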